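(* Let $(Q,\cdot)$ be a quasigroup. Then: (1) if $Q$ satisfies $x(y(zy))=(x(yz))y$ for all $x,y,z$ (LG3-quasigroup), then $Q$ is a right loop; (2) if $Q$ satisfies $(xx)(yz)=((xx)y)z$ for all $x,y,z$ (LNQ-quasigroup), then $Q$ is a left loop; (3) if $Q$ satisfies $x(y(yz))=(x(yy))z$ for all $x,y,z$ (LC4-quasigroup), then $Q$ is a right loop; (4) if $Q$ satisfies $x(y(xz))=(x(yx))z$ for all $x,y,z$ (left Bol quasigroup), then $Q$ is a right loop; (5) if $Q$ satisfies $x(xy)=(xx)y$ for all $x,y$ (left alternative quasigroup), then $Q$ is a left loop.
   Context: A quasigroup is a set $Q$ with a binary operation $\cdot$ (written as juxtaposition) such that for all $a,b\in Q$ each of the equations $ax=b$ and $ya=b$ has a unique solution in $Q$. A quasigroup $Q$ is a left loop if there is $e\in Q$ with $ea=a$ for all $a\in Q$, and a right loop if there is $e\in Q$ with $ae=a$ for all $a\in Q$. *)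

Definition is_quasigroup {Q : Type} (m : Q -> Q -> Q) : Prop :=
  forall a b : Q,
    (exists x, m a x = b /\ forall x', m a x' = b -> x' = x) /\
    (exists y, m y a = b /\ forall y', m y' a = b -> y' = y).

Definition left_loop {Q : Type} (m : Q -> Q -> Q) : Prop :=
  exists e : Q, forall a : Q, m e a = a.

Definition right_loop {Q : Type} (m : Q -> Q -> Q) : Prop :=
  exists e : Q, forall a : Q, m a e = a.

(* Each law, specialised at a fixed element q0, turns a local identity of q0
   (a solution of q0 f = q0 or of s e = s for a square s) into a one-sided
   identity for all elements: either by cancelling a factor, or by writing an
   arbitrary element as a product, which unique solvability always allows. *)


Section Quasigroup.

Variables (Q : Type) (m : Q -> Q -> Q).
Hypothesis HQ : is_quasigroup m.

Lemma quasigroup_ldiv (a b : Q) : exists x, m a x = b.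
Proof. destruct (HQ a b) as [[x [Hx _]] _]. eauto. Qed.

Lemma quasigroup_rdiv (a b : Q) : exists y, m y a = b.
Proof. destruct (HQ a b) as [_ [y [Hy _]]]. eauto. Qed.

Lemma quasigroup_lcancel (a x x' : Q) : m a x = m a x' -> x = x'.
Proof.
  intros E. destruct (HQ a (m a x)) as [[u [_ U]] _].
  rewrite (U x eq_refl), (U x' (eq_sym E)). reflexivity.
Qed.

Lemma quasigroup_rcancel (a x x' : Q) : m x a = m x' a -> x = x'.
Proof.
  intros E. destruct (HQ a (m x a)) as [_ [u [_ U]]].
  rewrite (U x eq_refl), (U x' (eq_sym E)). reflexivity.
Qed.

Definition LG3_law : Prop := forall x y z, m x (m y (m z y)) = m (m x (m y z)) y.
Definition LNQ_law : Prop := forall x y z, m (m x x) (m y z) = m (m (m x x) y) z.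
Definition LC4_law : Prop := forall x y z, m x (m y (m y z)) = m (m x (m y y)) z.
Definition left_Bol_law : Prop := forall x y z, m x (m y (m x z)) = m (m x (m y x)) z.
Definition left_alternative_law : Prop := forall x y, m x (m x y) = m (m x x) y.

Variable q0 : Q.

Lemma LG3_right_loop : LG3_law -> right_loop m.
Proof.
  intros H. destruct (quasigroup_ldiv q0 q0) as [f Hf].
  destruct (quasigroup_rdiv q0 f) as [z Hz].
  exists (m q0 z). intros a. apply (quasigroup_rcancel q0).
  rewrite <- H, Hz, Hf. reflexivity.
Qed.

Lemma LNQ_left_loop : LNQ_law -> left_loop m.
Proof.
  intros H. destruct (quasigroup_ldiv (m q0 q0) (m q0 q0)) as [e He].
  exists e. intros a. apply (quasigroup_lcancel (m q0 q0)).
  rewrite H, He. reflexivity.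
Qed.

Lemma LC4_right_loop : LC4_law -> right_loop m.
Proof.
  intros H. destruct (quasigroup_ldiv q0 q0) as [z Hz].
  exists z. intros a. destruct (quasigroup_rdiv (m q0 q0) a) as [b <-].
  rewrite <- H, Hz. reflexivity.
Qed.

Lemma left_Bol_right_loop : left_Bol_law -> right_loop m.
Proof.
  intros H. destruct (quasigroup_ldiv q0 q0) as [f Hf].
  exists f. intros a. destruct (quasigroup_ldiv q0 a) as [c <-].
  destruct (quasigroup_rdiv q0 c) as [y <-].
  rewrite <- H, Hf. reflexivity.
Qed.

Lemma left_alternative_left_loop : left_alternative_law -> left_loop m.
Proof.
  intros H. destruct (quasigroup_rdiv q0 q0) as [e He].
  assert (Hee : m e e = e).
  { apply (quasigroup_rcancel q0). rewrite <- H, He, He. reflexivity. }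
  exists e. intros a. apply (quasigroup_lcancel e).
  rewrite H, Hee. reflexivity.
Qed.

End Quasigroup.

Theorem mainTheorem4 (Q : Type) (m : Q -> Q -> Q) (q0 : Q) (HQ : is_quasigroup m) :
  ((forall x y z, m x (m y (m z y)) = m (m x (m y z)) y) -> right_loop m) /\
  ((forall x y z, m (m x x) (m y z) = m (m (m x x) y) z) -> left_loop m) /\
  ((forall x y z, m x (m y (m y z)) = m (m x (m y y)) z) -> right_loop m) /\
  ((forall x y z, m x (m y (m x z)) = m (m x (m y x)) z) -> right_loop m) /\
  ((forall x y, m x (m x y) = m (m x x) y) -> left_loop m).
Proof.
  repeat split.
  - exact (LG3_right_loop _ _ HQ q0).
  - exact (LNQ_left_loop _ _ HQ q0).
  - exact (LC4_right_loop _ _ HQ q0).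
  - exact (left_Bol_right_loop _ _ HQ q0).
  - exact (left_alternative_left_loop _ _ HQ q0).
Qed.
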